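(* Let $\underline{L}$ be a finite lattice. Then there exists a unique DI-core of $\underline{L}$; that is, the family $DI(\underline{L})$ has exactly one smallest element with respect to set inclusion.
   Context: For $u\le v$ in a lattice $L$, $[u,v]=\{x\mid u\le x\le v\}$, $(v]=\{x\mid x\le v\}$, $[u)=\{x\mid u\le x\}$. An interval $[u,v]$ of $L$ is dismantling for $L$ if $u\neq\bot$, $v\neq\top$, $u$ is supremum-prime in $(v]$ (for all $x,y\in(v]$, $u\le x\vee y$ implies $u\le x$ or $u\le y$) and $v$ is infimum-prime in $[u)$ (for all $x,y\in[u)$, $x\wedge y\le v$ implies $x\le v$ or $y\le v$). Removing a dismantling interval from a lattice leaves a lattice (with the restricted order). $DI(\underline{L})$ is the family of all subsets of $L$ obtainable by iterated dismantling starting from $\underline{L}$: $X\in DI(\underline{L})$ iff there is a sequence $L=X_0\supseteq X_1\supseteq\cdots\supseteq X_k=X$ ($k\ge0$) such that for each $i$, $X_{i+1}=X_i\setminus S_i$ for some interval $S_i$ of the lattice $X_i$ that is dismantling for $X_i$. A smallest element of $DI(\underline{L})$ (with respect to inclusion) is called a DI-core of $\underline{L}$. *)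

From mathcomp Require Import all_boot all_order.
Set Implicit Arguments. Unset Strict Implicit. Unset Printing Implicit Defensive.
Import Order.Theory.
Local Open Scope order_scope.

Section DI.
Context {d : Order.disp_t} {T : finTBLatticeType d}.

(* The order on a subset X of T is the restriction of the order of T. *)

Definition intv (X : {set T}) (u v : T) : {set T} :=
  [set x in X | (u <= x) && (x <= v)].

Definition is_join_in (X : {set T}) (x y z : T) : Prop :=
  [/\ z \in X, x <= z, y <= z &
      forall w, w \in X -> x <= w -> y <= w -> z <= w].

Definition is_meet_in (X : {set T}) (x y z : T) : Prop :=
  [/\ z \in X, z <= x, z <= y &
      forall w, w \in X -> w <= x -> w <= y -> w <= z].

Definition is_bot_in (X : {set T}) (u : T) : Prop := forall x, x \in X -> u <= x.
Definition is_top_in (X : {set T}) (v : T) : Prop := forall x, x \in X -> x <= v.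

Definition sup_prime_below (X : {set T}) (u v : T) : Prop :=
  forall x y z, x \in X -> y \in X -> x <= v -> y <= v ->
    is_join_in X x y z -> u <= z -> u <= x \/ u <= y.

Definition inf_prime_above (X : {set T}) (u v : T) : Prop :=
  forall x y z, x \in X -> y \in X -> u <= x -> u <= y ->
    is_meet_in X x y z -> z <= v -> x <= v \/ y <= v.

Definition dismantling (X : {set T}) (u v : T) : Prop :=
  [/\ u \in X, v \in X, u <= v,
      ~ is_bot_in X u /\ ~ is_top_in X v &
      sup_prime_below X u v /\ inf_prime_above X u v].

Inductive DI : {set T} -> Prop :=
| DI_base : DI [set: T]
| DI_step (X : {set T}) (u v : T) :
    DI X -> dismantling X u v -> DI (X :\: intv X u v).

Definition DI_core (C : {set T}) : Prop :=
  DI C /\ forall X, DI X -> C \subset X.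

End DI.

From mathcomp Require Import all_boot all_order.
From Stdlib Require Import Classical.
Set Implicit Arguments. Unset Strict Implicit. Unset Printing Implicit Defensive.
Import Order.Theory.

(* Every member of DI(L) is a {0,1}-sublattice of L, so joins and meets in it
   are those of L.  Call a member C of DI(L) undismantlable if it has no
   dismantling interval; such a C exists by finiteness, since each dismantling
   step removes at least one element.  It lies below every X in DI(L): if some
   c in C were removed from X together with a dismantling interval [u,v] of X,
   then the meet u' and the join v' of C ∩ [u,v] would make [u',v'] a
   dismantling interval of C (primality in X transfers to C because C is a
   sublattice inside [u,v]). *)

Section DICore.
Local Open Scope order_scope.
Context {d : Order.disp_t} {T : finTBLatticeType d}.
Implicit Types (X C : {set T}) (u v x y z : T).

Definition tb_sublattice X : Prop :=
  [/\ \bot \in X, \top \in X,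
      {in X &, forall x y : T, x `&` y \in X} &
      {in X &, forall x y : T, x `|` y \in X}].

Definition dismantlable X : Prop := exists u v, dismantling X u v.

Lemma is_join_in_join X x y : x `|` y \in X -> is_join_in X x y (x `|` y).
Proof. by move=> xyX; split; rewrite ?leUl ?leUr // => w _ xw yw; rewrite leUx xw yw. Qed.

Lemma is_meet_in_meet X x y : x `&` y \in X -> is_meet_in X x y (x `&` y).
Proof. by move=> xyX; split; rewrite ?leIl ?leIr // => w _ wx wy; rewrite lexI wx wy. Qed.

Lemma is_join_in_le_join X x y z :
  x `|` y \in X -> is_join_in X x y z -> z <= x `|` y.
Proof. by move=> xyX [_ _ _ zmin]; rewrite zmin ?leUl ?leUr. Qed.

Lemma is_meet_in_meet_le X x y z :
  x `&` y \in X -> is_meet_in X x y z -> x `&` y <= z.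
Proof. by move=> xyX [_ _ _ zmax]; rewrite zmax ?leIl ?leIr. Qed.

Lemma tb_sublattice_setT : tb_sublattice [set: T].
Proof. by split=> [||? ? _ _|? ? _ _]; exact: in_setT. Qed.

Lemma tb_sublattice_dismantle X u v :
  tb_sublattice X -> dismantling X u v -> tb_sublattice (X :\: intv X u v).
Proof.
move=> [botX topX meetX joinX] [uX vX _ [u_nbot v_ntop] [u_prime v_prime]].
split.
- rewrite !inE botX andbT; apply/negP => /and3P[_ u_bot _].
  by apply: u_nbot => x _; rewrite (le_trans u_bot) ?le0x.
- rewrite !inE topX andbT; apply/negP => /and3P[_ _ top_v].
  by apply: v_ntop => x _; rewrite (le_trans _ top_v) ?lex1.
- move=> x y; rewrite !inE => /andP[xI xX] /andP[yI yX].
  rewrite meetX // andbT; apply/negP => /and3P[_ + xyv]; rewrite lexI => /andP[ux uy].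
  have [xv|yv] := v_prime x y _ xX yX ux uy (is_meet_in_meet (meetX _ _ xX yX)) xyv.
    by rewrite xX ux xv in xI.
  by rewrite yX uy yv in yI.
- move=> x y; rewrite !inE => /andP[xI xX] /andP[yI yX].
  rewrite joinX // andbT; apply/negP => /and3P[_ uxy]; rewrite leUx => /andP[xv yv].
  have [ux|uy] := u_prime x y _ xX yX xv yv (is_join_in_join (joinX _ _ xX yX)) uxy.
    by rewrite xX ux xv in xI.
  by rewrite yX uy yv in yI.
Qed.

Lemma DI_tb_sublattice X : DI X -> tb_sublattice X.
Proof.
elim=> [|{}X u v _ tbX dXuv]; first exact: tb_sublattice_setT.
exact: tb_sublattice_dismantle.
Qed.

Lemma card_dismantle_lt X u v :
  dismantling X u v -> #|X :\: intv X u v| < #|X|.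
Proof.
move=> [uX _ uv _ _]; apply/proper_card/properP; split; first exact: subsetDl.
by exists u; rewrite // !inE uX lexx uv.
Qed.

Section DismantlingRestriction.
Variables (X C : {set T}) (u v : T).
Hypotheses (tbC : tb_sublattice C) (sCX : C \subset X) (dXuv : dismantling X u v).

Let CX := subsetP sCX.

Let u' := \meet_(x in intv C u v) x.
Let v' := \join_(x in intv C u v) x.

Let mem_intvC x : x \in C -> u <= x -> x <= v -> x \in intv C u v.
Proof. by move=> xC ux xv; rewrite inE xC ux xv. Qed.

Let u'_in : u' \in C.
Proof.
case: tbC => _ topC meetC _.
by apply: (big_ind (fun w => w \in C)) => // x /[!inE] /andP[].
Qed.

Let v'_in : v' \in C.
Proof.
case: tbC => botC _ _ joinC.
by apply: (big_ind (fun w => w \in C)) => // x /[!inE] /andP[].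
Qed.

Let le_u_u' : u <= u'.
Proof. by apply/meetsP => x /[!inE] /and3P[]. Qed.

Let le_v'_v : v' <= v.
Proof. by apply/joinsP => x /[!inE] /and3P[]. Qed.

Let u'_sup_prime : sup_prime_below C u' v'.
Proof.
case: dXuv tbC => _ _ _ _ [u_prime _] [_ _ _ joinC].
move=> x y z xC yC xv' yv' zxy u'z.
have xyC := joinC _ _ xC yC.
have xv := le_trans xv' le_v'_v; have yv := le_trans yv' le_v'_v.
have uxy : u <= x `|` y.
  exact: le_trans le_u_u' (le_trans u'z (is_join_in_le_join xyC zxy)).
have [ux|uy] :=
  u_prime x y _ (CX xC) (CX yC) xv yv (is_join_in_join (CX xyC)) uxy.
  by left; apply: meets_inf; exact: mem_intvC.
by right; apply: meets_inf; exact: mem_intvC.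
Qed.

Let v'_inf_prime : inf_prime_above C u' v'.
Proof.
case: dXuv tbC => _ _ _ _ [_ v_prime] [_ _ meetC _].
move=> x y z xC yC u'x u'y zxy zv'.
have xyC := meetC _ _ xC yC.
have ux := le_trans le_u_u' u'x; have uy := le_trans le_u_u' u'y.
have xyv : x `&` y <= v.
  exact: le_trans (le_trans (is_meet_in_meet_le xyC zxy) zv') le_v'_v.
have [xv|yv] :=
  v_prime x y _ (CX xC) (CX yC) ux uy (is_meet_in_meet (CX xyC)) xyv.
  by left; apply: joins_sup; exact: mem_intvC.
by right; apply: joins_sup; exact: mem_intvC.
Qed.

Lemma dismantlable_restrict c : c \in C -> c \in intv X u v -> dismantlable C.
Proof.
move=> cC /[!inE] /and3P[_ uc cv].
have cI := mem_intvC cC uc cv.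
have u'c : u' <= c by exact: meets_inf.
have cv' : c <= v' by exact: joins_sup.
exists u', v'.
case: dXuv tbC => _ _ _ [u_nbot v_ntop] _ [botC topC _ _].
split=> //; first exact: le_trans u'c cv'.
split.
- move=> u'_bot; apply: u_nbot => x _.
  exact: le_trans le_u_u' (le_trans (u'_bot _ botC) (le0x x)).
- move=> v'_top; apply: v_ntop => x _.
  exact: le_trans (lex1 x) (le_trans (v'_top _ topC) le_v'_v).
Qed.

End DismantlingRestriction.

Lemma undismantlable_DI_sub C X :
  DI C -> ~ dismantlable C -> DI X -> C \subset X.
Proof.
move=> DC C_nd; elim=> [|{}X u v _ sCX dXuv]; first exact: subsetT.
apply/subsetP => c cC; rewrite inE (subsetP sCX _ cC) andbT.
apply/negP => cI.
exact: C_nd (dismantlable_restrict (DI_tb_sublattice DC) sCX dXuv cC cI).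
Qed.

Lemma exists_DI_undismantlable : exists C, DI C /\ ~ dismantlable C.
Proof.
suff by_card n X : #|X| = n -> DI X -> exists C, DI C /\ ~ dismantlable C.
  exact: (by_card _ [set: T] erefl DI_base).
elim/ltn_ind: n X => n IH X Xn DX; subst n.
have [[u [v dXuv]]|X_nd] := classic (dismantlable X); last by exists X.
exact: IH (card_dismantle_lt dXuv) _ erefl (DI_step DX dXuv).
Qed.

Lemma DI_core_unique C1 C2 : DI_core C1 -> DI_core C2 -> C1 = C2.
Proof.
move=> [DC1 minC1] [DC2 minC2].
by apply/eqP; rewrite eqEsubset minC1 // minC2.
Qed.

End DICore.

Theorem theorem2 (d : Order.disp_t) (L : finTBLatticeType d) :
  exists! C : {set L}, DI_core C.
Proof.
have [C [DC C_nd]] := exists_DI_undismantlable (T := L).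
have coreC : DI_core C by split=> // X; exact: undismantlable_DI_sub.
by exists C; split=> // C' coreC'; exact: DI_core_unique.
Qed.
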